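(* In the push-based remote estimation problem described in the context, if $\beta<1$ there are at least $|\mathcal{S}|$ local optima (joint encoder–decoder policies that are Nash equilibria, i.e., from which neither the encoder nor the decoder can improve the objective by unilaterally changing its own policy), even without imposing the perfect-estimation constraint.
   Context: Remote estimation problem: finite state set $\mathcal{S}$, a Markov chain with a fixed transition matrix $\mathbf{P}$, unaffected by the decoder's actions. At each time $t$ an encoder observes $s_t$ and decides $c_t\in\{0,1\}$ (transmit $s_t$ or not); the decoder observes $s_t$ if $c_t=1$ and a no-transmission symbol otherwise, and outputs an estimate $a_t\in\mathcal{S}$. The common objective of encoder and decoder is $\mathbb{E}\big[\sum_t\gamma^t(\mathbb{1}[a_t=s_t]-\beta c_t)\big]$ with $\gamma\in[0,1)$ and communication cost $\beta>0$. The decoder's policy depends on the time since the last transmission and the last transmitted state, and the decoder knows the encoder's policy (so non-transmission can carry implicit information). The perfect-estimation constraint refers to requiring that the decoder's belief over $s_t$ is always a point mass. *)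

From HB Require Import structures.
From mathcomp Require Import all_boot all_order all_algebra.
From mathcomp Require Import all_classical all_reals all_analysis.
Set Implicit Arguments. Unset Strict Implicit. Unset Printing Implicit Defensive.
Import Order.TTheory GRing.Theory Num.Theory.
Local Open Scope ring_scope.

Section RemoteEstimation.
Variables (R : realType) (S : finType).

(* Decoder information state: (time since last transmission, last transmitted
   state); [None] = no transmission has happened yet (then the counter is the
   time since the start). *)
Definition dstate := (nat * option S)%type.

(* Encoder: sees the decoder's information state before time t and the
   current state s_t, decides whether to transmit. *)
Definition encoder := nat -> option S -> S -> bool.
(* Decoder: outputs an estimate from (time since last transmission, last
   transmitted state), after the time-t observation has been incorporated. *)
Definition decoder := nat -> option S -> S.

Definition init_dstate : dstate := (0%N, None).

Definition upd_dstate (e : encoder) (sg : dstate) (s : S) : dstate :=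
  if e sg.1 sg.2 s then (0%N, Some s) else (sg.1.+1, sg.2).

Definition run_dstate (e : encoder) (l : seq S) : dstate :=
  foldl (upd_dstate e) init_dstate l.

(* reward at the last time of a trajectory x :: l, i.e. at time size l:
   1[a_t = s_t] - beta * c_t *)
Definition stage_reward (beta : R) (e : encoder) (d : decoder) (x : S) (l : seq S) : R :=
  let past := run_dstate e (belast x l) in
  let s := last x l in
  let c := e past.1 past.2 s in
  let sg := upd_dstate e past s in
  (d sg.1 sg.2 == s)%:R - beta * c%:R.

Fixpoint path_prob (P : S -> S -> R) (x : S) (l : seq S) : R :=
  if l is y :: l' then P x y * path_prob P y l' else 1.

Definition expected_reward (mu : S -> R) (P : S -> S -> R) (beta : R)
    (e : encoder) (d : decoder) (t : nat) : R :=
  \sum_(w : t.+1.-tuple S)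
     mu (thead w) * path_prob P (thead w) (behead w) *
     stage_reward beta e d (thead w) (behead w).

Definition objective (mu : S -> R) (P : S -> S -> R) (gamma beta : R)
    (e : encoder) (d : decoder) : R :=
  limn (fun n => \sum_(t < n) gamma ^+ t * expected_reward mu P beta e d t).

Definition nash_equilibrium (mu : S -> R) (P : S -> S -> R) (gamma beta : R)
    (e : encoder) (d : decoder) : Prop :=
  (forall e' : encoder, objective mu P gamma beta e' d <= objective mu P gamma beta e d) /\
  (forall d' : decoder, objective mu P gamma beta e d' <= objective mu P gamma beta e d).

Definition prob_vector (mu : S -> R) : Prop :=
  (forall s, 0 <= mu s) /\ \sum_(s : S) mu s = 1.

Definition stochastic (P : S -> S -> R) : Prop :=
  (forall s s', 0 <= P s s') /\ (forall s, \sum_(s' : S) P s s' = 1).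

End RemoteEstimation.

(* For each state x consider the encoder that transmits exactly when the state
   differs from x, and the decoder that outputs the freshly transmitted state
   and x otherwise. Against this decoder, the encoder earns the best possible
   stage reward at every time and on every trajectory: staying silent on x is
   free, and staying silent on s <> x costs 1 > beta. Against this encoder the
   decoder already estimates perfectly. Since the objective is monotone under
   pathwise domination of stage rewards, both are best responses, and distinct
   x give distinct encoders. *)
From HB Require Import structures.
From mathcomp Require Import all_boot all_order all_algebra.
From mathcomp Require Import all_classical all_reals all_analysis.
From mathcomp Require Import lra.
Import Order.TTheory GRing.Theory Num.Theory.
Local Open Scope ring_scope.

Lemma big_tupleS (V : nmodType) (T : finType) n (F : n.+1.-tuple T -> V) :
  \sum_(w : n.+1.-tuple T) F w = \sum_(x : T) \sum_(t : n.-tuple T) F (cons_tuple x t).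
Proof.
rewrite pair_big (reindex (fun p : T * n.-tuple T => cons_tuple p.1 p.2)) //=.
exists (fun w => (thead w, behead_tuple w)) => [[x t] _|w _] /=.
  by congr pair; apply: val_inj.
by rewrite [RHS]tuple_eta; apply: val_inj.
Qed.

Lemma big_tuple0 (V : nmodType) (T : finType) (F : 0.-tuple T -> V) :
  \sum_(w : 0.-tuple T) F w = F [tuple].
Proof.
rewrite (eq_bigr (fun _ => F [tuple])); last by move=> w _; rewrite tuple0.
by rewrite sumr_const card_tuple expn0.
Qed.

Section Objective.
Variables (R : realType) (S : finType) (mu : S -> R) (P : S -> S -> R).
Hypotheses (mu_prob : prob_vector mu) (P_stochastic : stochastic P).

Lemma path_prob_ge0 x l : 0 <= path_prob P x l.
Proof.
elim: l x => [|y l IHl] x /=; first exact: ler01.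
by rewrite mulr_ge0 //; case: P_stochastic.
Qed.

Lemma sum_path_prob n x : \sum_(l : n.-tuple S) path_prob P x l = 1.
Proof.
elim: n x => [|n IHn] x; first by rewrite big_tuple0.
rewrite big_tupleS /=.
under eq_bigr => y _ do rewrite -mulr_sumr IHn mulr1.
by case: P_stochastic.
Qed.

Lemma trajectory_weight_ge0 t (w : t.+1.-tuple S) :
  0 <= mu (thead w) * path_prob P (thead w) (behead w).
Proof. by rewrite mulr_ge0 ?path_prob_ge0 //; case: mu_prob. Qed.

Lemma sum_trajectory_weight t :
  \sum_(w : t.+1.-tuple S) mu (thead w) * path_prob P (thead w) (behead w) = 1.
Proof.
rewrite big_tupleS.
under eq_bigr => x _.
  under eq_bigr => l _ do rewrite theadE /=.
  rewrite -mulr_sumr sum_path_prob mulr1.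
  over.
by case: mu_prob.
Qed.

Lemma stage_reward_bound (beta : R) (e : encoder S) (d : decoder S) x l :
  `|stage_reward beta e d x l| <= 1 + `|beta|.
Proof.
apply: le_trans (ler_normB _ _) _.
apply: lerD; first by case: (_ == _); rewrite ?normr0 ?normr1.
by case: (e _ _ _); rewrite ?mulr1 ?mulr0 ?normr0.
Qed.

Lemma expected_reward_bound (beta : R) (e : encoder S) (d : decoder S) t :
  `|expected_reward mu P beta e d t| <= 1 + `|beta|.
Proof.
rewrite -[leRHS]mul1r -{1}(sum_trajectory_weight t) mulr_suml.
apply: le_trans (ler_norm_sum _ _ _) _; apply: ler_sum => w _.
rewrite normrM ger0_norm ?trajectory_weight_ge0 //.
by rewrite ler_wpM2l ?trajectory_weight_ge0 ?stage_reward_bound.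
Qed.

Lemma ler_expected_reward (beta : R) (e e' : encoder S) (d d' : decoder S) t :
  (forall x l, stage_reward beta e' d' x l <= stage_reward beta e d x l) ->
  expected_reward mu P beta e' d' t <= expected_reward mu P beta e d t.
Proof.
by move=> le_stage; apply: ler_sum => w _; rewrite ler_wpM2l ?trajectory_weight_ge0.
Qed.

Variable gamma : R.
Hypotheses (gamma_ge0 : 0 <= gamma) (gamma_lt1 : gamma < 1).

Lemma objective_cvg (beta : R) (e : encoder S) (d : decoder S) :
  cvgn (fun n => \sum_(t < n) gamma ^+ t * expected_reward mu P beta e d t).
Proof.
have -> : (fun n => \sum_(t < n) gamma ^+ t * expected_reward mu P beta e d t) =
    series (fun t => gamma ^+ t * expected_reward mu P beta e d t).
  by apply/funext => n; rewrite /series /= big_mkord.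
apply: normed_cvg.
apply: (@series_le_cvg _ _ (geometric (1 + `|beta|) gamma)) => [n|n|n|].
- exact: normr_ge0.
- by rewrite /geometric /= mulr_ge0 ?exprn_ge0 ?addr_ge0.
- rewrite /geometric /= normrM ger0_norm ?exprn_ge0 // mulrC.
  by rewrite ler_wpM2r ?exprn_ge0 ?expected_reward_bound.
- by apply: is_cvg_geometric_series; rewrite ger0_norm.
Qed.

Lemma ler_objective (beta : R) (e e' : encoder S) (d d' : decoder S) :
  (forall x l, stage_reward beta e' d' x l <= stage_reward beta e d x l) ->
  objective mu P gamma beta e' d' <= objective mu P gamma beta e d.
Proof.
move=> le_stage; apply: ler_lim; try exact: objective_cvg.
apply: nearW => n; apply: ler_sum => t _.
by rewrite ler_wpM2l ?exprn_ge0 ?ler_expected_reward.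
Qed.

End Objective.

Section DefaultStatePolicies.
Variables (R : realType) (S : finType) (x : S).

Definition skip_encoder : encoder S := fun _ _ s => s != x.

Definition default_decoder : decoder S :=
  fun k o => if (k, o) is (0%N, Some s) then s else x.

Lemma skip_encoder_best_response (beta : R) (e : encoder S) x0 l :
  0 <= beta -> beta <= 1 ->
  stage_reward beta e default_decoder x0 l <=
  stage_reward beta skip_encoder default_decoder x0 l.
Proof.
move=> beta_ge0 beta_le1; rewrite /stage_reward /upd_dstate.
move: (run_dstate e _) (run_dstate skip_encoder _) (last x0 l) => p p' s.
rewrite /skip_encoder /default_decoder.
case: (e _ _ _); case: (eqVneq s x) => [->|ne_sx] /=; rewrite ?eqxx /=;
  rewrite ?(eq_sym x) ?(negbTE ne_sx) /=; lra.
Qed.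

Lemma default_decoder_best_response (beta : R) (d : decoder S) x0 l :
  stage_reward beta skip_encoder d x0 l <=
  stage_reward beta skip_encoder default_decoder x0 l.
Proof.
rewrite /stage_reward /upd_dstate.
move: (run_dstate skip_encoder _) (last x0 l) => p s.
rewrite /skip_encoder /default_decoder.
by case: (eqVneq s x) => [->|ne_sx] /=; rewrite ?eqxx lerD2r ler_nat leq_b1.
Qed.

End DefaultStatePolicies.

Arguments skip_encoder {S}.
Arguments default_decoder {S}.

Lemma skip_encoder_inj (S : finType) : injective (@skip_encoder S).
Proof.
move=> x y /(congr1 (fun e : encoder S => e 0%N None x)).
by rewrite /skip_encoder eqxx => /esym/negbFE/eqP.
Qed.

Theorem corollary1 (R : realType) (S : finType) (mu : S -> R) (P : S -> S -> R)
    (gamma beta : R) :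
  prob_vector mu -> stochastic P ->
  0 <= gamma -> gamma < 1 -> 0 < beta -> beta < 1 ->
  exists f : S -> encoder S * decoder S,
    (forall x y, f x = f y -> x = y) /\
    (forall x, nash_equilibrium mu P gamma beta (f x).1 (f x).2).
Proof.
move=> mu_prob P_stochastic gamma_ge0 gamma_lt1 beta_gt0 beta_lt1.
exists (fun x => (skip_encoder x, default_decoder x)); split.
  by move=> x y [/skip_encoder_inj].
move=> x; split=> [e|d] /=; apply: ler_objective => // x0 l.
  by apply: skip_encoder_best_response; apply: ltW.
exact: default_decoder_best_response.
Qed.
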